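(* Let $X$ be a set and $\{X_i\}_{i\in I}$ a family of subsets of $X$. Let $Y$ be the simplicial graph with vertex set $X$ in which two distinct points are adjacent iff some $X_i$ contains both. Suppose that (1) $Y$ has no infinite cliques; (2) any finite pairwise intersecting subfamily of $\{X_i\}$ has nonempty intersection; (3) for any pairwise intersecting $X_{i_1},X_{i_2},X_{i_3}$ there exists $X_{i_0}$ in the family with $(X_{i_1}\cap X_{i_2})\cup(X_{i_2}\cap X_{i_3})\cup(X_{i_3}\cap X_{i_1})\subseteq X_{i_0}$. Then $Y$ is finitely clique Helly.
   Context: A graph is finitely clique Helly if every finite pairwise intersecting family of maximal cliques (viewed as vertex sets) has nonempty intersection. *)

From mathcomp Require Import all_boot.
From mathcomp Require Export classical_sets cardinality.
Set Implicit Arguments. Unset Strict Implicit. Unset Printing Implicit Defensive.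
Local Open Scope classical_set_scope.

Definition fam_adj (X I : Type) (F : I -> set X) (x y : X) : Prop :=
  x <> y /\ exists i, F i x /\ F i y.

Definition is_clique (X : Type) (adj : X -> X -> Prop) (C : set X) : Prop :=
  forall x y, C x -> C y -> x <> y -> adj x y.

Definition is_max_clique (X : Type) (adj : X -> X -> Prop) (C : set X) : Prop :=
  is_clique adj C /\ (forall D, is_clique adj D -> C `<=` D -> D = C).

Definition pairwise_meet (X : Type) (Q : set (set X)) : Prop :=
  forall A B, Q A -> Q B -> exists x, A x /\ B x.

Definition fin_clique_helly (X : Type) (adj : X -> X -> Prop) : Prop :=
  forall Q : set (set X),
    finite_set Q -> Q !=set0 ->
    (forall C, Q C -> is_max_clique adj C) ->
    pairwise_meet Q ->
    exists x, forall C, Q C -> C x.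

From mathcomp Require Import all_boot classical_sets cardinality boolp.
Set Implicit Arguments. Unset Strict Implicit. Unset Printing Implicit Defensive.
Local Open Scope classical_set_scope.

(* If a member of the family of maximal cliques is a single point, that point
   lies in every member.  Otherwise every member C has two points, so it is
   finite by (1), and by induction on |C| the triangle condition (3) puts C
   inside some X_i: for distinct x, y, z in C the cliques C \ x, C \ y, C \ z
   lie in sets X_a, X_b, X_c meeting pairwise in z, x and y, and the set X_d
   given by (3) for them contains all of C.  As X_i is itself a clique,
   maximality gives C = X_i.  So the family is a finite pairwise intersecting
   subfamily of the X_i, and (2) applies. *)

Lemma finite_set_uniq_seq (T : eqType) (A : set T) :
  finite_set A -> exists2 s : seq T, uniq s & A = [set` s].
Proof.
move=> /finite_seqP[s ->]; exists (undup s); first exact: undup_uniq.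
by apply/seteqP; split=> x /=; rewrite mem_undup.
Qed.

Lemma set_rem_uniq (T : eqType) (s : seq T) (x : T) :
  uniq s -> [set` rem x s] = [set` s] `\ x.
Proof.
move=> s_uniq; apply/seteqP; split=> y /=; rewrite mem_rem_uniq //= inE.
  by case/andP=> /eqP.
by case=> sy /eqP yx; apply/andP.
Qed.

Lemma finite_image_section (T U : Type) (f : T -> U) (A : set U) :
  finite_set A -> A `<=` range f -> exists2 B, finite_set B & f @` B = A.
Proof.
move=> finA Af.
have [->|/set0P[u0 /Af[t0 _ _]]] := eqVneq A set0.
  by exists set0; rewrite ?image_set0.
have [g fgK] : {g : U -> T & forall u, A u -> f (g u) = u}.
  apply: (@choice _ _ (fun u t => A u -> f t = u)) => u.
  by case: (pselect (A u)) => [/Af[t _ <-]|nAu]; [exists t | exists t0].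
exists (g @` A); first exact: finite_image.
apply/seteqP; split=> [_ [_ [u Au <-] <-]|u Au]; first by rewrite fgK.
by exists (g u); [exists u | rewrite fgK].
Qed.

Lemma pairwise_meet_subset1 (X : Type) (Q : set (set X)) (C : set X) :
  pairwise_meet Q -> Q C -> is_subset1 C -> exists x, forall D, Q D -> D x.
Proof.
move=> meetQ QC C1; have [x [Cx _]] := meetQ C C QC QC.
exists x => D QD; have [y [Cy Dy]] := meetQ C D QC QD.
by rewrite -(C1 _ _ Cy Cx).
Qed.

Lemma sub_clique (X : Type) (adj : X -> X -> Prop) (C D : set X) :
  is_clique adj C -> D `<=` C -> is_clique adj D.
Proof. by move=> clC DC x y Dx Dy; apply: clC; apply: DC. Qed.

Section FamilyCliques.
Variables (X I : Type) (F : I -> set X).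

Lemma clique_fam (i : I) : is_clique (fam_adj F) (F i).
Proof. by move=> x y Fx Fy xy; split=> //; exists i. Qed.

Lemma max_clique_sub_fam (C : set X) (i : I) :
  is_max_clique (fam_adj F) C -> C `<=` F i -> F i = C.
Proof. by case=> _ maxC; apply: maxC; apply: clique_fam. Qed.

Hypothesis triangle : forall i1 i2 i3 : I,
  (exists x, F i1 x /\ F i2 x) -> (exists x, F i2 x /\ F i3 x) ->
  (exists x, F i3 x /\ F i1 x) ->
  exists i0, (F i1 `&` F i2) `|` (F i2 `&` F i3) `|` (F i3 `&` F i1)
             `<=` F i0.

Lemma fam_cover_triangle (C : set X) (x y z : X) :
  C x -> C y -> C z -> x <> y -> y <> z -> z <> x ->
  (exists a, C `\ x `<=` F a) -> (exists b, C `\ y `<=` F b) ->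
  (exists c, C `\ z `<=` F c) -> exists d, C `<=` F d.
Proof.
move=> Cx Cy Cz xy yz zx [a Ca] [b Cb] [c Cc].
have inD1 (u v : X) : C u -> u <> v -> (C `\ v) u.
  by move=> Cu uv; split=> // /uv.
have ab : exists w, F a w /\ F b w.
  by exists z; split; [apply: Ca | apply: Cb]; apply: inD1 => //; exact: nesym.
have bc : exists w, F b w /\ F c w.
  by exists x; split; [apply: Cb | apply: Cc]; apply: inD1 => //; exact: nesym.
have ca : exists w, F c w /\ F a w.
  by exists y; split; [apply: Cc | apply: Ca]; apply: inD1 => //; exact: nesym.
have [d Fd] := triangle ab bc ca.
exists d => w Cw; apply: Fd.
have [->|wx] := pselect (w = x).
  left; right.
  by split; [apply: Cb | apply: Cc]; apply: inD1 => //; exact: nesym.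
have [->|wy] := pselect (w = y).
  by right; split; [apply: Cc | apply: Ca]; apply: inD1 => //; exact: nesym.
by left; left; split; [apply: Ca | apply: Cb]; apply: inD1 => //; exact: nesym.
Qed.

Lemma finite_clique_sub_fam (C : set X) :
  finite_set C -> is_clique (fam_adj F) C -> ~ is_subset1 C ->
  exists i, C `<=` F i.
Proof.
move=> /(@finite_set_uniq_seq {classic X})[s s_uniq ->] {C}.
have [n] := ubnP (size s); elim: n => // n IHn in s s_uniq *.
rewrite ltnS => size_s clique_s /existsNP[x /existsNP[y]].
move=> /not_implyP[sx /not_implyP[sy xy]].
have [[z [sz [zx zy]]]|no_z] :=
  pselect (exists z, [set` s] z /\ z <> x /\ z <> y).
  have cover_rem (u v w : X) : [set` s] u -> [set` s] v -> [set` s] w ->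
      v <> w -> v <> u -> w <> u -> exists a, [set` s] `\ u `<=` F a.
    move=> su sv sw vw vu wu; rewrite -set_rem_uniq //.
    apply: IHn; first exact: rem_uniq.
    - rewrite size_rem // (leq_trans _ size_s) // ltn_predL -has_predT.
      by apply/hasP; exists u.
    - by apply: sub_clique clique_s _ => t /mem_rem.
    - by rewrite set_rem_uniq // => rem1; apply: vw; apply: rem1; split.
  apply: (fam_cover_triangle sx sy sz xy (nesym zy) zx).
  - exact: cover_rem sx sy sz (nesym zy) (nesym xy) zx.
  - exact: cover_rem sy sz sx zx zy xy.
  - exact: cover_rem sz sx sy xy (nesym zx) (nesym zy).
have [_ [i [Fx Fy]]] := clique_s x y sx sy xy.
exists i => w sw; have [->//|wx] := pselect (w = x).
have [->//|wy] := pselect (w = y).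
by case: no_z; exists w.
Qed.

Hypothesis cliques_finite :
  forall C : set X, is_clique (fam_adj F) C -> finite_set C.

Lemma max_clique_fam (C : set X) :
  is_max_clique (fam_adj F) C -> ~ is_subset1 C -> range F C.
Proof.
move=> maxC C1; have clC := maxC.1.
have [i Ci] := finite_clique_sub_fam (cliques_finite clC) clC C1.
by exists i => //; apply: max_clique_sub_fam maxC Ci.
Qed.

End FamilyCliques.

Theorem lemma3p3 (X I : Type) (F : I -> set X) :
  (* (1) Y has no infinite cliques *)
  (forall C : set X, is_clique (fam_adj F) C -> finite_set C) ->
  (* (2) finite pairwise intersecting subfamilies have nonempty intersection *)
  (forall J : set I, finite_set J -> J !=set0 ->
     (forall i j, J i -> J j -> exists x, F i x /\ F j x) ->
     exists x, forall i, J i -> F i x) ->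
  (* (3) triangle condition *)
  (forall i1 i2 i3 : I,
     (exists x, F i1 x /\ F i2 x) -> (exists x, F i2 x /\ F i3 x) ->
     (exists x, F i3 x /\ F i1 x) ->
     exists i0, (F i1 `&` F i2) `|` (F i2 `&` F i3) `|` (F i3 `&` F i1)
                `<=` F i0) ->
  fin_clique_helly (fam_adj F).
Proof.
move=> fin_clique helly triangle Q finQ [C0 QC0] Qmax meetQ.
have [[C [QC C1]]|] := pselect (exists C, Q C /\ is_subset1 C).
  exact: pairwise_meet_subset1 meetQ QC C1.
move=> /forallNP notC1.
have QF : Q `<=` range F.
  move=> C QC; apply: (max_clique_fam triangle fin_clique (Qmax C QC)).
  by move=> C1; apply: (notC1 C).
have [J finJ FJ] := finite_image_section finQ QF.
have J0 : J !=set0 by apply: (@nonempty_image _ _ F); rewrite FJ; exists C0.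
have [x Jx] : exists x, forall i, J i -> F i x.
  apply: helly => // i j Ji Jj.
  by apply: meetQ; rewrite -FJ; [exists i | exists j].
by exists x; rewrite -FJ => _ [i Ji <-]; apply: Jx.
Qed.
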